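(* Let $(A,[\cdot,\cdot])$ be an anticommutative algebra over a field $\mathbb K$ of characteristic $0$, i.e. $[x,y]=-[y,x]$ for all $x,y\in A$. Then $A$ is an Acaa-algebra if and only if $[x_1,[x_2,x_1]]=0$ for all $x_1,x_2\in A$.
   Context: An Acaa-algebra over a field $\mathbb K$ of characteristic $0$ is a $\mathbb K$-vector space $A$ with a bilinear product $[\cdot,\cdot]$ which is anticommutative, $[x,y]=-[y,x]$, and satisfies $[x_1,[x_2,x_3]]=[x_2,[x_3,x_1]]$ for all $x_1,x_2,x_3\in A$. *)

From mathcomp Require Import all_boot all_order all_algebra.
Set Implicit Arguments. Unset Strict Implicit. Unset Printing Implicit Defensive.
Import GRing.Theory.
Local Open Scope ring_scope.

Definition bilinear_prod (K : fieldType) (A : lmodType K) (br : A -> A -> A) :=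
  (forall a x y z, br (a *: x + y) z = a *: br x z + br y z) /\
  (forall a x y z, br x (a *: y + z) = a *: br x y + br x z).

Definition anticommutative (K : fieldType) (A : lmodType K) (br : A -> A -> A) :=
  forall x y, br x y = - br y x.

Definition is_Acaa (K : fieldType) (A : lmodType K) (br : A -> A -> A) :=
  anticommutative br /\ forall x1 x2 x3, br x1 (br x2 x3) = br x2 (br x3 x1).

From mathcomp Require Import all_boot all_order all_algebra.
Local Open Scope ring_scope.
Import GRing.Theory.

(* Since [x,x] = 0 away from characteristic 2, the identity [x1,[x2,x1]] = 0
   is the Acaa identity at x3 = x1.  Conversely, polarizing it in x1 gives
   [x,[y,z]] = -[z,[y,x]] = [z,[x,y]]; applying this cyclic symmetry twice
   yields [x1,[x2,x3]] = [x3,[x1,x2]] = [x2,[x3,x1]]. *)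

Section AnticommutativeAlgebra.

Variables (K : fieldType) (A : lmodType K) (br : A -> A -> A).
Hypotheses (hbil : bilinear_prod br) (hanti : anticommutative br).

Lemma br_addl x y z : br (x + y) z = br x z + br y z.
Proof. by rewrite -[x in LHS]scale1r hbil.1 scale1r. Qed.

Lemma br_addr x y z : br x (y + z) = br x y + br x z.
Proof. by rewrite -[y in LHS]scale1r hbil.2 scale1r. Qed.

Lemma br_x0 x : br x 0 = 0.
Proof. by apply: (addrI (br x 0)); rewrite -br_addr !addr0. Qed.

Lemma br_xN x y : br x (- y) = - br x y.
Proof. by rewrite -scaleN1r -[_ *: y]addr0 hbil.2 br_x0 addr0 scaleN1r. Qed.

Lemma br_xx (two_neq0 : 2%:R != 0 :> K) x : br x x = 0.
Proof.
have two_brxx : (2%:R : K) *: br x x = 0.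
  by rewrite scaler_nat mulr2n {1}hanti addNr.
by rewrite -[br x x]scale1r -(mulVf two_neq0) -scalerA two_brxx scaler0.
Qed.

Lemma Acaa_br_xyx (two_neq0 : 2%:R != 0 :> K) :
  is_Acaa br -> forall x y, br x (br y x) = 0.
Proof. by move=> [_ hAcaa] x y; rewrite hAcaa br_xx // br_x0. Qed.

Section Polarization.

Hypothesis br_xyx : forall x y, br x (br y x) = 0.

Lemma br_xyz_polar x y z : br x (br y z) + br z (br y x) = 0.
Proof.
have := br_xyx (x + z) y.
by rewrite br_addr !br_addl !br_addr !br_xyx add0r addr0.
Qed.

Lemma br_cycle x y z : br x (br y z) = br z (br x y).
Proof.
by apply/eqP; rewrite -subr_eq0 (hanti x y) br_xN opprK br_xyz_polar.
Qed.

Lemma br_xyx_Acaa : is_Acaa br.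
Proof. by split=> // x1 x2 x3; rewrite 2!br_cycle. Qed.

End Polarization.

End AnticommutativeAlgebra.

Theorem mainTheorem1 (K : fieldType) (hK : [pchar K] =i pred0)
  (A : lmodType K) (br : A -> A -> A)
  (hbil : bilinear_prod br) (hanti : anticommutative br) :
  is_Acaa br <-> (forall x1 x2 : A, br x1 (br x2 x1) = 0).
Proof.
have two_neq0 : 2%:R != 0 :> K by rewrite ((pcharf0P K).1 hK).
by split; [exact: Acaa_br_xyx | exact: br_xyx_Acaa].
Qed.
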